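(* Let $V$ be a smooth manifold carrying two structures of a finite-dimensional real vector space (compatible with its smooth structure), with scalar multiplications $h^1_t$ and $h^2_t$, $t\ge 0$. If the homotheties commute, $h^1_t\circ h^2_s=h^2_s\circ h^1_t$ for all $s,t\ge 0$, then the two vector space structures coincide. *)

From HB Require Import structures.
From mathcomp Require Import all_boot all_order all_algebra.
From mathcomp Require Import all_classical all_reals all_analysis.
Set Implicit Arguments. Unset Strict Implicit. Unset Printing Implicit Defensive.
Import Order.TTheory GRing.Theory Num.Theory.
Import numFieldNormedType.Exports.
Local Open Scope ring_scope.

Fixpoint Ck (R : realType) (n m : nat) (k : nat)
  (f : 'rV[R]_n -> 'rV[R]_m) : Prop :=
  match k with
  | 0 => continuous f
  | k'.+1 => (forall x v, derivable f x v) /\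
             (forall v, Ck k' (fun x => derive f x v))
  end.

Definition smooth (R : realType) (n m : nat) (f : 'rV[R]_n -> 'rV[R]_m) :=
  forall k, Ck k f.

(* A finite-dimensional real vector space structure on a set V, given by a
   linear coordinate system e : V -> R^n with inverse e'. *)
Record vs_structure (R : realType) (V : Type) := VSStruct {
  vs_dim : nat;
  vs_coord : V -> 'rV[R]_vs_dim;
  vs_inv : 'rV[R]_vs_dim -> V;
  vs_coordK : cancel vs_coord vs_inv;
  vs_invK : cancel vs_inv vs_coord }.
Arguments vs_dim {R V}.
Arguments vs_coord {R V}.
Arguments vs_inv {R V}.

Definition vs_add (R : realType) V (S : vs_structure R V) (x y : V) : V :=
  vs_inv S (vs_coord S x + vs_coord S y).
Definition vs_scale (R : realType) V (S : vs_structure R V) (t : R) (x : V) : V :=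
  vs_inv S (t *: vs_coord S x).

(* Two vector space structures are compatible with one common smooth structure
   on V iff the transition map between their linear charts is a diffeomorphism. *)
Definition smoothly_compatible (R : realType) V (S1 S2 : vs_structure R V) :=
  smooth (fun u => vs_coord S2 (vs_inv S1 u)) /\
  smooth (fun u => vs_coord S1 (vs_inv S2 u)).

From mathcomp Require Import all_boot all_order all_algebra.
From mathcomp Require Import all_classical all_reals all_analysis.
Set Implicit Arguments. Unset Strict Implicit. Unset Printing Implicit Defensive.
Import Order.TTheory GRing.Theory Num.Theory.
Import numFieldNormedType.Exports.
Local Open Scope classical_set_scope.
Local Open Scope ring_scope.

(* Work in the coordinates of the first structure, with phi the coordinate map
   of the second one and psi its inverse.  Commuting homotheties read
   t psi(s phi u) = psi(s phi(t u)) for s, t >= 0; differentiating at s = 0+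
   gives Dpsi(0)(phi(t u)) = t Dpsi(0)(phi u).  As psi has the locally
   Lipschitz left inverse phi, Dpsi(0) is injective, so phi is positively
   homogeneous.  A positively homogeneous map equals its directional
   derivative at 0, which for a C^1 map is linear in the direction; hence
   phi is linear and the two structures coincide. *)

Lemma mx_norm_ge_coord (K : realDomainType) (p q : nat) (A : 'M[K]_(p, q)) i j :
  `|A i j| <= `|A|.
Proof.
rewrite [leRHS]mx_normrE.
exact: (le_bigmax _ (fun ij : 'I_p * 'I_q => `|A ij.1 ij.2|) (i, j)).
Qed.

Lemma mx_norm_le (K : realDomainType) (p q : nat) (A : 'M[K]_(p, q)) (c : K) :
  0 <= c -> (forall i j, `|A i j| <= c) -> `|A| <= c.
Proof. by move=> c0 Ac; rewrite [leLHS]mx_normrE; apply/bigmax_leP; split=> // -[]. Qed.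

Section directional_derivative_at_right.
Variables (R : realType) (V W : normedModType R) (f : V -> W) (a v : V).
Hypothesis f_derivable : derivable f a v.

Lemma derive_cvg_at_right :
  h^-1 *: (f (h *: v + a) - f a) @[h --> 0^'+] --> 'D_v f a.
Proof. exact: cvg_dnbhs_at_right. Qed.

Lemma derive_at_right_eq (l : W) :
  h^-1 *: (f (h *: v + a) - f a) @[h --> 0^'+] --> l -> 'D_v f a = l.
Proof. by move=> ql; rewrite -(cvg_lim _ ql) // (cvg_lim _ derive_cvg_at_right). Qed.
End directional_derivative_at_right.

Section C1_map.
Variables (R : realType) (n m : nat) (f : 'rV[R]_n -> 'rV[R]_m).
Hypothesis f_derivable : forall x v, derivable f x v.
Hypothesis derive_f_continuous : forall v, continuous ('D_v f).

Lemma is_derive_along_line (x w : 'rV[R]_n) (r : R) k i :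
  is_derive r 1 (fun s => f (x + s *: w) k i) ('D_w f (x + r *: w) k i).
Proof.
set p := x + r *: w.
have quotE : (fun h : R => h^-1 *: (f (x + (h *: 1 + r) *: w) k i - f p k i)) =
    (fun M : 'rV[R]_m => M k i) \o (fun h : R => h^-1 *: (f (h *: w + p) - f p)).
  apply/funext => h /=; rewrite !mxE /p.
  by rewrite [h *: 1]mulr1 scalerDl addrCA addrA [x + _]addrC.
have cv : (fun h : R => h^-1 *: (f (x + (h *: 1 + r) *: w) k i - f p k i)) @ 0^'
    --> 'D_w f p k i.
  by rewrite quotE; apply: continuous_cvg; [exact: coord_continuous|exact: f_derivable].
split; first by apply/cvg_ex; exists ('D_w f p k i).
exact: cvg_lim cv.
Qed.

Lemma MVT_along_line (x w : 'rV[R]_n) (a b : R) k i : a <= b ->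
  exists2 c, c \in `[a, b] &
    f (x + b *: w) k i - f (x + a *: w) k i = 'D_w f (x + c *: w) k i * (b - a).
Proof.
move=> ab; apply: (MVT_segment (f := fun s => f (x + s *: w) k i)) => //.
  by move=> c _; exact: is_derive_along_line.
apply: derivable_within_continuous => c _.
by case: (is_derive_along_line x w c k i).
Qed.

(* By the mean value theorem each coordinate of the quotient is a value of
   'D_v f at a point of the segment [p t, p t + g t v], which shrinks to z. *)
Lemma cvg_diff_quotient (T : Type) (F : set_system T) {FF : Filter F}
    (p : T -> 'rV[R]_n) (g : T -> R) (z v : 'rV[R]_n) :
  p t @[t --> F] --> z -> g t @[t --> F] --> 0 -> (\forall t \near F, 0 < g t) ->
  (g t)^-1 *: (f (p t + g t *: v) - f (p t)) @[t --> F] --> 'D_v f z.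
Proof.
move=> pz g0 g_gt0.
have shrink : `|p t - z| + g t * `|v| @[t --> F] --> 0.
  rewrite -[0](addr0 0); apply: cvgD; last by rewrite -(mul0r `|v|); exact: cvgMl.
  rewrite -(@normr0 _ 'rV[R]_n) -(subrr z); exact: (cvg_norm (cvgB pz (cvg_cst z))).
apply/cvgrPdist_le => e e0.
have /cvgrPdist_le /(_ e e0) /nbhs_ballP [d /= d0 near_z] := @derive_f_continuous v z.
near=> t.
have gt0 : 0 < g t by near: t.
apply: mx_norm_le => [|k i]; first exact: ltW.
have [c /[!in_itv] /= /andP [c0 cg] quotE] := MVT_along_line (p t) v k i (ltW gt0).
rewrite scale0r addr0 subr0 in quotE.
have -> : ('D_v f z - (g t)^-1 *: (f (p t + g t *: v) - f (p t))) k i =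
    ('D_v f z - 'D_v f (p t + c *: v)) k i.
  by rewrite !mxE quotE mulrCA mulVf ?gt_eqF // mulr1.
apply/(le_trans (mx_norm_ge_coord _ _ _))/near_z.
rewrite -ball_normE /ball_ /= opprD addrA.
apply: (le_lt_trans (ler_normB _ _)); rewrite distrC normrZ (ger0_norm c0).
apply: (@le_lt_trans _ _ (`|p t - z| + g t * `|v|)).
  by rewrite lerD2l ler_wpM2r.
near: t; apply: filterS (cvgr0_norm_lt _ shrink _ d0) => t; exact/le_lt_trans/ler_norm.
Unshelve. all: by end_near.
Qed.

Lemma derive_dirD (z u v : 'rV[R]_n) : 'D_(u + v) f z = 'D_u f z + 'D_v f z.
Proof.
have id0 : (fun h : R => h) @ 0^'+ --> 0 by exact: cvg_at_right_filter.
have split_quot : (fun h => h^-1 *: (f (h *: (u + v) + z) - f z)) =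
    (fun h => h^-1 *: (f ((h *: u + z) + h *: v) - f (h *: u + z)) +
              h^-1 *: (f (h *: u + z) - f z)).
  apply/funext => h; rewrite -scalerDr addrA subrK.
  by rewrite [h *: (u + v)]scalerDr addrAC.
apply: derive_at_right_eq => //.
rewrite split_quot addrC; apply: cvgD; last exact: derive_cvg_at_right.
apply: cvg_diff_quotient => //; last exact: nbhs_right_gt.
by rewrite -[X in _ --> X]add0r -(scale0r u); apply: cvgD (cvgZ id0 (cvg_cst u)) (cvg_cst z).
Qed.

Lemma derive_dirZ_gt0 (z w : 'rV[R]_n) (c : R) :
  0 < c -> 'D_(c *: w) f z = c *: 'D_w f z.
Proof.
move=> c0.
have quotE : (fun h => h^-1 *: (f (h *: (c *: w) + z) - f z)) =
    (fun h => c *: ((h * c)^-1 *: (f (z + (h * c) *: w) - f z))).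
  apply/funext => h; rewrite scalerA [in RHS]scalerA invfM mulrCA mulfV ?gt_eqF //.
  by rewrite mulr1 [z + _]addrC.
apply: (derive_at_right_eq (@f_derivable z (c *: w))).
rewrite quotE; apply: cvgZ; first exact: cvg_cst.
apply: (cvg_diff_quotient (p := fun=> z)) => //; first exact: cvg_cst.
  by rewrite -[X in _ --> X](mul0r c); apply: cvgMl; exact: cvg_at_right_filter.
by near=> h; rewrite mulr_gt0 //; near: h; exact: nbhs_right_gt.
Unshelve. all: by end_near.
Qed.

Lemma derive_dirN (z w : 'rV[R]_n) : 'D_(- w) f z = - 'D_w f z.
Proof. by apply/eqP; rewrite -addr_eq0 -derive_dirD addNr derive0. Qed.

Lemma derive_dirZ (z w : 'rV[R]_n) (c : R) : 'D_(c *: w) f z = c *: 'D_w f z.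
Proof.
case: (ltgtP c 0) => [c_lt0|c_gt0|->]; last by rewrite !scale0r derive0.
- rewrite -[c *: w]opprK -scaleNr derive_dirN derive_dirZ_gt0 ?oppr_gt0 //.
  by rewrite scaleNr opprK.
- exact: derive_dirZ_gt0.
Qed.

Lemma derive_dir_row_sum (z y : 'rV[R]_n) :
  'D_y f z = \sum_(j < n) y 0 j *: 'D_(delta_mx 0 j) f z.
Proof.
rewrite {1}(row_sum_delta y) (big_morph _ (derive_dirD z) (derive0 f z)).
by apply: eq_bigr => j _; rewrite derive_dirZ.
Qed.

Lemma lipschitz_near (a : 'rV[R]_n) :
  exists2 M : R, 0 <= M & \forall y \near a, `|f y - f a| <= M * `|y - a|.
Proof.
pose M := \sum_(j < n) (`|'D_(delta_mx 0 j) f a| + 1).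
have M_ge0 : 0 <= M by apply: sumr_ge0 => j _; rewrite addr_ge0.
have derive_bounded (j : 'I_n) : \forall x \near a,
    `|'D_(delta_mx 0 j) f x| <= `|'D_(delta_mx 0 j) f a| + 1.
  have /cvgrPdist_le /(_ 1 ltr01) near1 := @derive_f_continuous (delta_mx 0 j) a.
  apply: filterS near1 => x dist_le1; rewrite -lerBlDl distrC in dist_le1 *.
  exact: le_trans (lerB_dist _ _) dist_le1.
have [d /= d0 near_a] := (nbhs_ballP _ _).1 (@filter_forall _ _ _ _ _ derive_bounded).
exists M => //; apply/nbhs_ballP; exists d => // y /= ya.
apply: mx_norm_le => [|k i]; first by rewrite mulr_ge0.
have [c /[!in_itv] /= /andP [c0 c1] quotE] := MVT_along_line a (y - a) k i ler01.
rewrite scale1r scale0r addr0 subr0 mulr1 addrCA subrr addr0 in quotE.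
rewrite [(f y - f a) k i]mxE [(- f a) k i]mxE quotE derive_dir_row_sum summxE.
apply: (le_trans (ler_norm_sum _ _ _)).
rewrite /M mulr_suml; apply: ler_sum => j _.
rewrite mxE normrM mulrC; apply: ler_pM => //; last exact: mx_norm_ge_coord.
apply: le_trans (mx_norm_ge_coord _ _ _) _; apply: near_a.
rewrite -ball_normE /ball_ /= opprD addrA subrr sub0r normrN normrZ (ger0_norm c0).
move: ya; rewrite -ball_normE /ball_ /= distrC; apply: le_lt_trans.
exact: ler_piMl.
Qed.
End C1_map.

Section positively_homogeneous.
Variables (R : realType) (V W : normedModType R).

Lemma pos_homogeneous_eq_derive (f : V -> W) (w : V) :
  (forall (t : R) u, 0 <= t -> f (t *: u) = t *: f u) ->
  derivable f 0 w -> f w = 'D_w f 0.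
Proof.
move=> homf fw; apply/esym/(derive_at_right_eq fw).
have f0 : f 0 = 0 by rewrite -(scale0r (0 : V)) homf // scale0r.
apply: cvg_near_cst; near=> h.
have h_gt0 : 0 < h by near: h; exact: nbhs_right_gt.
by rewrite /= addr0 f0 subr0 homf ?ltW // scalerA mulVf ?gt_eqF // scale1r.
Unshelve. all: by end_near.
Qed.

Lemma derive_eq0_left_inverse (psi : V -> W) (phi : W -> V) (M : R) (w : V) :
  cancel psi phi -> psi 0 = 0 -> 0 <= M ->
  (\forall y \near 0, `|phi y - phi 0| <= M * `|y|) ->
  derivable psi 0 w -> 'D_w psi 0 = 0 -> w = 0.
Proof.
move=> psiK psi0 M_ge0 phi_lip psi_w Dw0.
pose q h := h^-1 *: psi (h *: w).
have q_cvg0 : q h @[h --> 0^'+] --> 0.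
  have := derive_cvg_at_right psi_w; rewrite Dw0.
  by under eq_fun do rewrite addr0 psi0 subr0.
have psi_cvg0 : psi (h *: w) @[h --> 0^'+] --> 0.
  rewrite -(scale0r (0 : W)); apply: cvg_trans _ (cvgZ (cvg_at_right_filter cvg_id) q_cvg0).
  apply: near_eq_cvg; near=> h.
  have h_gt0 : 0 < h by near: h; exact: nbhs_right_gt.
  by rewrite /q scalerA mulfV ?gt_eqF // scale1r.
apply/normr0_eq0/eqP; rewrite eq_le normr_ge0 andbT; apply/ler_addgt0Pr => e e_gt0.
have eM_gt0 : 0 < e / (M + 1) by rewrite divr_gt0 // ltr_wpDl.
have q_small : \forall h \near 0^'+, `|q h| <= e / (M + 1).
  exact: cvgr0_norm_le q_cvg0 _ eM_gt0.
have psi_hw_lip : \forall h \near 0^'+,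
    `|phi (psi (h *: w)) - phi 0| <= M * `|psi (h *: w)|.
  exact: psi_cvg0 phi_lip.
have [h [h_gt0 qh_small hw_lip]] : exists h, [/\ 0 < h, `|q h| <= e / (M + 1) &
    `|phi (psi (h *: w)) - phi 0| <= M * `|psi (h *: w)|].
  apply: (@filter_ex _ (0^'+ : set_system R)); near=> h.
  by split; near: h => //; exact: nbhs_right_gt.
have psi_hw : psi (h *: w) = h *: q h by rewrite /q scalerA mulfV ?gt_eqF // scale1r.
rewrite psiK -[X in phi X]psi0 psiK subr0 psi_hw (normrZ h w) (normrZ h (q h)) in hw_lip.
rewrite (gtr0_norm h_gt0) in hw_lip.
rewrite mulrCA ler_pM2l // in hw_lip.
rewrite add0r; apply: (le_trans hw_lip); apply: (le_trans (ler_wpM2l M_ge0 qh_small)).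
by rewrite mulrA ler_pdivrMr ?ltr_wpDl // [e * _]mulrC mulrDl mul1r lerDl ltW.
Unshelve. all: by end_near.
Qed.
End positively_homogeneous.

Section transition_map.
Variables (R : realType) (n p : nat).
Variables (phi : 'rV[R]_n -> 'rV[R]_p) (psi : 'rV[R]_p -> 'rV[R]_n).
Hypotheses (phi_C1 : Ck 1 phi) (psi_C1 : Ck 1 psi).
Hypothesis psiK : cancel psi phi.
Hypothesis homothetiesC : forall (s t : R) u, 0 <= s -> 0 <= t ->
  t *: psi (s *: phi u) = psi (s *: phi (t *: u)).

Let phi_derivable : forall x v, derivable phi x v := phi_C1.1.
Let derive_phi_continuous : forall v, continuous ('D_v phi) := phi_C1.2.
Let psi_derivable : forall x v, derivable psi x v := psi_C1.1.
Let derive_psi_continuous : forall v, continuous ('D_v psi) := psi_C1.2.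

Lemma inv_transition0 : psi 0 = 0.
Proof.
have := @homothetiesC 0 2 0 (lexx _) (ler0n _ 2).
by rewrite !scale0r scaler_nat mulr2n => /eqP; rewrite -subr_eq0 addrK => /eqP.
Qed.

Lemma derive_inv_transition0_homogeneous (t : R) u :
  0 <= t -> 'D_(phi (t *: u)) psi 0 = t *: 'D_(phi u) psi 0.
Proof.
move=> t_ge0; apply: derive_at_right_eq; first exact: psi_derivable.
apply: cvg_trans _ (cvgZ (cvg_cst t) (derive_cvg_at_right (@psi_derivable 0 (phi u)))).
apply: near_eq_cvg; near=> h.
have h_gt0 : 0 < h by near: h; exact: nbhs_right_gt.
rewrite /= !addr0 inv_transition0 !subr0 -(homothetiesC _ (ltW h_gt0) t_ge0).
by rewrite !scalerA mulrC.
Unshelve. all: by end_near.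
Qed.

Lemma transition_pos_homogeneous (t : R) u : 0 <= t -> phi (t *: u) = t *: phi u.
Proof.
move=> t_ge0; have [M M_ge0 phi_lip] := lipschitz_near phi_derivable derive_phi_continuous 0.
apply/eqP; rewrite -subr_eq0; apply/eqP.
apply: (derive_eq0_left_inverse psiK inv_transition0 M_ge0 _ (@psi_derivable 0 _)).
  by apply: filterS phi_lip => y; rewrite subr0.
rewrite (derive_dirD psi_derivable derive_psi_continuous).
rewrite (derive_dirN psi_derivable derive_psi_continuous).
rewrite (derive_dirZ psi_derivable derive_psi_continuous).
by rewrite derive_inv_transition0_homogeneous // subrr.
Qed.

Lemma transition_eq_derive w : phi w = 'D_w phi 0.
Proof.
apply: pos_homogeneous_eq_derive; last exact: phi_derivable.
exact: transition_pos_homogeneous.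
Qed.

Lemma transitionD a b : phi (a + b) = phi a + phi b.
Proof.
by rewrite !transition_eq_derive (derive_dirD phi_derivable derive_phi_continuous).
Qed.

Lemma transitionZ (t : R) a : phi (t *: a) = t *: phi a.
Proof.
by rewrite !transition_eq_derive (derive_dirZ phi_derivable derive_phi_continuous).
Qed.
End transition_map.

Theorem proposition2 (R : realType) (V : Type) (S1 S2 : vs_structure R V) :
  smoothly_compatible S1 S2 ->
  (forall (s t : R) (x : V), 0 <= s -> 0 <= t ->
     vs_scale S1 t (vs_scale S2 s x) = vs_scale S2 s (vs_scale S1 t x)) ->
  (forall x y : V, vs_add S1 x y = vs_add S2 x y) /\
  (forall (t : R) (x : V), vs_scale S1 t x = vs_scale S2 t x).
Proof.
move=> [smooth12 smooth21] scaleC.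
pose phi u := vs_coord S2 (vs_inv S1 u).
pose psi w := vs_coord S1 (vs_inv S2 w).
have psiK : cancel psi phi by move=> w; rewrite /psi /phi vs_coordK vs_invK.
have homothetiesC s t u : 0 <= s -> 0 <= t ->
    t *: psi (s *: phi u) = psi (s *: phi (t *: u)).
  move=> s_ge0 t_ge0; have := scaleC s t (vs_inv S1 u) s_ge0 t_ge0.
  by rewrite /vs_scale => /(congr1 (vs_coord S1)); rewrite !vs_invK.
have coord2E x : vs_coord S2 x = phi (vs_coord S1 x) by rewrite /phi vs_coordK.
have inv2E a : vs_inv S2 (phi a) = vs_inv S1 a by rewrite /phi vs_coordK.
have phiD a b : phi (a + b) = phi a + phi b.
  exact: transitionD (smooth12 1%N) (smooth21 1%N) psiK homothetiesC a b.
have phiZ t a : phi (t *: a) = t *: phi a.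
  exact: transitionZ (smooth12 1%N) (smooth21 1%N) psiK homothetiesC t a.
split=> [x y | t x]; rewrite /vs_add /vs_scale !coord2E -inv2E.
- by rewrite phiD.
- by rewrite phiZ.
Qed.
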